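(* Let $q$ be a prime power and $n\ge1$. If $a,b$ are integers with $1\le a<b\le n(q-1)$, then $\dim(C_{n,b}^q)-\dim(C_{n,a}^q)\ge b-a$.
   Context: For a prime power $q$ and integers $n\ge 1$, $k\ge 0$, the projective Reed-Muller code $C_{n,k}^q\subseteq \mathbb{F}_q^N$, $N=\frac{q^{n+1}-1}{q-1}$, is defined as follows. For each point of $\mathbb{P}^n(\mathbb{F}_q)$ choose the affine representative $(p_0,\dots,p_n)\in\mathbb{F}_q^{n+1}\setminus\{0\}$ whose left-most nonzero coordinate equals $1$, and fix an ordering $P_1',\dots,P_N'$ of these representatives. Then $C_{n,k}^q=\{(F(P_1'),\dots,F(P_N')) : F\in \mathbb{F}_q[x_0,\dots,x_n]_k\}$, where $\mathbb{F}_q[x_0,\dots,x_n]_k$ is the space of homogeneous polynomials of degree $k$ together with $0$. *)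

From HB Require Import structures.
From mathcomp Require Import all_boot all_algebra.
From mathcomp Require Import mpoly.
Set Implicit Arguments. Unset Strict Implicit. Unset Printing Implicit Defensive.
Import GRing.Theory.
Local Open Scope ring_scope.

(* A vector (p_0,...,p_n) of F^{n+1} is a normalized representative of a point
   of P^n(F): it is nonzero and its left-most nonzero coordinate equals 1. *)
Definition normalized_rep (F : finFieldType) (n : nat) (x : {ffun 'I_n.+1 -> F}) : bool :=
  [exists i : 'I_n.+1, (x i == 1) && [forall j : 'I_n.+1, (j < i)%N ==> (x j == 0)]].

Definition proj_points (F : finFieldType) (n : nat) : seq {ffun 'I_n.+1 -> F} :=
  [seq x <- enum {ffun 'I_n.+1 -> F} | normalized_rep x].

Definition proj_N (F : finFieldType) (n : nat) : nat := size (proj_points F n).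

Definition prm_eval (F : finFieldType) (n k : nat) (P : dhomog n.+1 F k)
  : 'rV[F]_(proj_N F n) :=
  \row_(i < proj_N F n) (val P).@[nth [ffun => 0] (proj_points F n) i].

Definition PRM_code (F : finFieldType) (n k : nat) : {vspace 'rV[F]_(proj_N F n)} :=
  limg (linfun (@prm_eval F n k)).

Definition PRM_dim (F : finFieldType) (n k : nat) : nat := \dim (PRM_code F n k).

(* Sanity check: the evaluation map is indeed linear, so [linfun prm_eval]
   coincides with [prm_eval] and PRM_code is literally its image. *)
Lemma prm_eval_linear (F : finFieldType) (n k : nat) : linear (@prm_eval F n k).
Proof.
move=> c P Q; apply/rowP => i; rewrite !mxE /=.
by rewrite mevalD mevalZ.
Qed.

Lemma PRM_codeE (F : finFieldType) (n k : nat) (P : dhomog n.+1 F k) :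
  linfun (@prm_eval F n k) P = prm_eval P.
Proof.
pose f := GRing.isLinear.Build _ _ _ _ _ (@prm_eval_linear F n k).
exact: (lfunE (HB.pack (@prm_eval F n k) f)).
Qed.

From mathcomp Require Import all_boot all_algebra.
From mathcomp Require Import mpoly.
From HB Require Import structures.
From mathcomp Require Import finfield zify.
Set Implicit Arguments. Unset Strict Implicit. Unset Printing Implicit Defensive.
Import GRing.Theory.
Local Open Scope ring_scope.

(* Reading a word as the function on [F^(n+1)] that vanishes off the normalized
   representatives identifies [C_{n,k}] with the span [G_{n+1}(k)] of the
   functions [x |-> [x normalized] x^e], [|e| = k].  Restriction to the chart
   [x_0 = 1] maps [G_{n+1}(k)] onto the functions on [F^n] given by polynomials of
   degree [<= k], a space with basis the reduced monomials (exponents [< q]) of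
   degree [<= k]; the kernel, made of functions supported on [x_0 = 0], is a copy
   of [G_n(k - (q - 1))] when [k >= q] and is [0] otherwise.  Hence
     [dim G_{n+1}(k) = r_n(k) + [k >= q] dim G_n(k - (q - 1))],
   with [r_n(k)] the number of reduced exponents of degree [<= k].  The second
   term is nondecreasing in [k], and [r_n] grows by at least one at each step up
   to [n (q - 1)], since every such degree is attained by a reduced exponent. *)

Section FfunCons.
Variable T : Type.

Definition vcons n (a : T) (x : {ffun 'I_n -> T}) : {ffun 'I_n.+1 -> T} :=
  [ffun i => if unlift ord0 i is Some j then x j else a].
Definition vtail n (x : {ffun 'I_n.+1 -> T}) : {ffun 'I_n -> T} :=
  [ffun i => x (lift ord0 i)].

Lemma vcons_ord0 n a (x : {ffun 'I_n -> T}) : vcons a x ord0 = a.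
Proof. by rewrite ffunE unlift_none. Qed.

Lemma vcons_lift n a (x : {ffun 'I_n -> T}) j : vcons a x (lift ord0 j) = x j.
Proof. by rewrite ffunE liftK. Qed.

Lemma vconsK n a (x : {ffun 'I_n -> T}) : vtail (vcons a x) = x.
Proof. by apply/ffunP=> j; rewrite ffunE vcons_lift. Qed.

Lemma vcons_eta n (x : {ffun 'I_n.+1 -> T}) : x = vcons (x ord0) (vtail x).
Proof.
apply/ffunP=> i; rewrite ffunE; case: (unliftP ord0 i) => [j ->|->] //.
by rewrite ffunE.
Qed.

End FfunCons.

Lemma vcons_eq (T : eqType) n (x : {ffun 'I_n.+1 -> T}) a (y : {ffun 'I_n -> T}) :
  (x == vcons a y) = (x ord0 == a) && (vtail x == y).
Proof.
apply/eqP/andP => [->|[/eqP x0 /eqP xt]]; first by rewrite vcons_ord0 vconsK.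
by rewrite [x]vcons_eta x0 xt.
Qed.

Lemma sum_nth_indicator (R : nzRingType) (T : eqType) (s : seq T) x0 (g : T -> R) x :
  uniq s ->
  \sum_(i < size s) (nth x0 s i == x)%:R * g (nth x0 s i) = (x \in s)%:R * g x.
Proof.
move=> s_uniq; rewrite -(big_mkord predT (fun i => (nth x0 s i == x)%:R * g (nth x0 s i))).
rewrite -(big_nth x0 predT (fun y => (y == x)%:R * g y)).
have [xs|xNs] := boolP (x \in s).
  by rewrite (bigD1_seq x) //= eqxx big1 ?addr0 // => y /negbTE ->; rewrite mul0r.
rewrite big1_seq ?mul0r // => y /andP[_ ys].
by rewrite (_ : y == x = false) ?mul0r //; apply: contraNF xNs => /eqP <-.
Qed.

Section ProjectiveMonomials.
Variable F : finFieldType.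
Local Notation q := #|F|.

Lemma card_gt1 : (1 < q)%N. Proof. exact: card_finNzRing_gt1. Qed.

Lemma expr_card_red (x : F) m : (q <= m)%N -> x ^+ m = x ^+ (m - q.-1).
Proof.
move=> qm; have -> : m = ((m - q) + q)%N by rewrite subnK.
rewrite exprD expf_card -exprSr; congr (_ ^+ _); have := card_gt1; lia.
Qed.

Lemma expr_card_pred (x : F) : x ^+ q.-1 = (x != 0)%:R.
Proof.
have [->|x0] := eqVneq x 0; first by rewrite expr0n; have := card_gt1; case: q => [|[]].
by apply: (mulIf x0); rewrite -exprSr prednK ?expf_card ?mul1r // ltnW // card_gt1.
Qed.

Definition vec d := {ffun 'I_d -> F}.
(* [F^o] gives the space of functions its [vectType F] structure. *)
Definition vfun d := {ffun vec d -> F^o}.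

(* [normalized_rep] of the definitions, for vectors of any length. *)
Definition normalized d (x : vec d) : bool :=
  [exists i : 'I_d, (x i == 1) && [forall j : 'I_d, (j < i)%N ==> (x j == 0)]].

Lemma normalized0 (x : vec 0) : normalized x = false.
Proof. by apply/existsP => -[[]]. Qed.

Lemma normalizedS n (x : vec n.+1) :
  normalized x = (x ord0 == 1) || (x ord0 == 0) && normalized (vtail x).
Proof.
apply/existsP/idP => [[i /andP[xi1 /forallP xlt0]]|].
  case: (unliftP ord0 i) xi1 xlt0 => [j ->|->] xj1 xlt0; last by rewrite xj1.
  rewrite (implyP (xlt0 ord0)) //; apply/orP; right; apply/existsP; exists j.
  rewrite ffunE xj1; apply/forallP=> l; apply/implyP=> lj; rewrite ffunE.
  exact: (implyP (xlt0 (lift ord0 l))).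
case/orP=> [x01|/andP[x00 /existsP[j /andP[xj1 /forallP xlt0]]]].
  by exists ord0; rewrite x01; apply/forallP.
exists (lift ord0 j); rewrite -[x (lift _ _)](ffunE (fun i => x (lift ord0 i))) xj1.
apply/forallP=> l; apply/implyP; case: (unliftP ord0 l) => [l' ->|->] // l'j.
by have := implyP (xlt0 l') l'j; rewrite ffunE.
Qed.

Definition edeg d (e : {ffun 'I_d -> nat}) : nat := \sum_i e i.

Definition monomial d (e : {ffun 'I_d -> nat}) : vfun d :=
  [ffun x : vec d => \prod_i x i ^+ e i].

Definition proj_monomial d (e : {ffun 'I_d -> nat}) : vfun d :=
  [ffun x => (normalized x)%:R * monomial e x].

Lemma edegS n (e : {ffun 'I_n.+1 -> nat}) : edeg e = (e ord0 + edeg (vtail e))%N.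
Proof. by rewrite /edeg big_ord_recl; congr (_ + _)%N; apply: eq_bigr => i _; rewrite ffunE. Qed.

Lemma edeg_vcons n a (e : {ffun 'I_n -> nat}) : edeg (vcons a e) = (a + edeg e)%N.
Proof. by rewrite edegS vcons_ord0 vconsK. Qed.

Lemma leq_edeg d (e : {ffun 'I_d -> nat}) i : (e i <= edeg e)%N.
Proof. by rewrite /edeg (bigD1 i) //= leq_addr. Qed.

Lemma monomialS n (e : {ffun 'I_n.+1 -> nat}) x :
  monomial e x = x ord0 ^+ e ord0 * monomial (vtail e) (vtail x).
Proof.
by rewrite !ffunE big_ord_recl; congr (_ * _); apply: eq_bigr => i _; rewrite !ffunE.
Qed.

Definition ord_exp d m (t : {ffun 'I_d -> 'I_m}) : {ffun 'I_d -> nat} :=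
  [ffun i => nat_of_ord (t i)].

Lemma ord_exp_vcons n m (j : 'I_m) (t : {ffun 'I_n -> 'I_m}) :
  ord_exp (vcons j t) = vcons (nat_of_ord j) (ord_exp t).
Proof.
apply/ffunP=> i; case: (unliftP ord0 i) => [l ->|->].
  by rewrite ffunE !vcons_lift ffunE.
by rewrite ffunE !vcons_ord0.
Qed.

(* An exponent of degree [k] has all its entries below [k.+1]. *)
Definition exps_of_deg d k : seq {ffun 'I_d -> nat} :=
  [seq ord_exp t | t <- [seq t <- enum {ffun 'I_d -> 'I_k.+1} | edeg (ord_exp t) == k]].

Lemma mem_exps_of_deg d k e : (e \in exps_of_deg d k) = (edeg e == k).
Proof.
apply/mapP/idP => [[t] | /eqP ek]; first by rewrite mem_filter => /andP[? _] ->.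
have e_lt i : (e i < k.+1)%N by rewrite ltnS -ek leq_edeg.
have et : ord_exp [ffun i => Ordinal (e_lt i)] = e by apply/ffunP=> i; rewrite !ffunE.
by exists [ffun i => Ordinal (e_lt i)]; rewrite // mem_filter mem_enum et ek eqxx.
Qed.

Definition proj_span d k : {vspace vfun d} :=
  <<[seq proj_monomial e | e <- exps_of_deg d k]>>%VS.

Lemma proj_monomial_in_span d k e : edeg e = k -> proj_monomial e \in proj_span d k.
Proof. by move=> ek; apply/memv_span/map_f; rewrite mem_exps_of_deg ek. Qed.

Lemma proj_span_sub d k (U : {vspace vfun d}) :
  (forall e, edeg e = k -> proj_monomial e \in U) -> (proj_span d k <= U)%VS.
Proof.
move=> sU; apply/span_subvP => v /mapP [e]; rewrite mem_exps_of_deg => /eqP ek ->.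
exact: sU.
Qed.

Lemma proj_span0 k : proj_span 0 k = 0%VS.
Proof.
apply/eqP; rewrite -subv0; apply: proj_span_sub => e _.
by rewrite memv0; apply/eqP/ffunP=> x; rewrite !ffunE normalized0 mul0r.
Qed.

(** * Reduced monomials *)

Definition reduced_monomials d k : seq (vfun d) :=
  [seq monomial (ord_exp t) |
     t <- [seq t <- enum {ffun 'I_d -> 'I_q} | (edeg (ord_exp t) <= k)%N]].

Definition all_reduced_monomials d : seq (vfun d) :=
  [seq monomial (ord_exp t) | t <- enum {ffun 'I_d -> 'I_q}].

Definition reduce_exp d (e : {ffun 'I_d -> nat}) i : {ffun 'I_d -> nat} :=
  [ffun j => if j == i then (e j - q.-1)%N else e j].

Lemma monomial_reduce_exp d (e : {ffun 'I_d -> nat}) i :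
  (q <= e i)%N -> monomial (reduce_exp e i) = monomial e.
Proof.
move=> qe; apply/ffunP=> x; rewrite !ffunE; apply: eq_bigr => j _; rewrite ffunE.
by case: eqP => [->|] //; rewrite -expr_card_red.
Qed.

Lemma edeg_reduce_exp d (e : {ffun 'I_d -> nat}) i :
  (q <= e i)%N -> (edeg (reduce_exp e i) + q.-1 = edeg e)%N.
Proof.
move=> qe; rewrite /edeg (bigD1 i) //= [in RHS](bigD1 i) //= ffunE eqxx.
rewrite (eq_bigr (fun j => e j)) => [|j /negbTE ji]; last by rewrite ffunE ji.
by rewrite addnAC subnK // (leq_trans (leq_pred _) qe).
Qed.

Lemma monomial_in_reduced_span d k (e : {ffun 'I_d -> nat}) :
  (edeg e <= k)%N -> monomial e \in <<reduced_monomials d k>>%VS.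
Proof.
have [m] := ubnP (edeg e); elim: m e => [|m IHm] e // em ek.
have [/forallP e_lt | /forallPn [i]] := boolP [forall i, (e i < q)%N].
  have et : ord_exp [ffun i => Ordinal (e_lt i)] = e by apply/ffunP=> i; rewrite !ffunE.
  rewrite -et; apply/memv_span/map_f.
  by rewrite mem_filter mem_enum andbT et.
rewrite -leqNgt => qe; rewrite -(monomial_reduce_exp qe).
apply: IHm; have := edeg_reduce_exp qe; have := card_gt1; lia.
Qed.

Definition delta d (a : vec d) : vfun d := [ffun x => (x == a)%:R].

Lemma vfun_delta_sum d (f : vfun d) : f = \sum_a f a *: delta a.
Proof.
apply/ffunP=> x; rewrite sum_ffunE (bigD1 x) //= big1 => [|a /negbTE ax].
  by rewrite !ffunE eqxx addr0 [_ *: _]mulr1.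
by rewrite !ffunE eq_sym ax [_ *: _]mulr0.
Qed.

Definition tensorX n j (h : vfun n) : vfun n.+1 :=
  [ffun x : vec n.+1 => x ord0 ^+ j * h (vtail x)].

Fact tensorX_is_linear n j : linear (@tensorX n j).
Proof. by move=> c u v; apply/ffunP=> x; rewrite !ffunE mulrDr mulrCA. Qed.
HB.instance Definition _ n j := GRing.isLinear.Build F (vfun n) (vfun n.+1) _
  (@tensorX n j) (@tensorX_is_linear n j).

Lemma tensorX_monomial n j (e : {ffun 'I_n -> nat}) :
  tensorX j (monomial e) = monomial (vcons j e).
Proof. by apply/ffunP=> x; rewrite [RHS]monomialS vcons_ord0 vconsK ffunE. Qed.

Lemma delta_in_reduced_span d (a : vec d) : delta a \in <<all_reduced_monomials d>>%VS.
Proof.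
elim: d a => [|n IHn] a.
  have -> : delta a = monomial (ord_exp [ffun i : 'I_0 => Ordinal (ltnW card_gt1)]).
    apply/ffunP=> x; rewrite !ffunE big_ord0.
    by rewrite (_ : x = a) ?eqxx //; apply/ffunP => -[].
  by apply/memv_span/map_f; rewrite mem_enum.
(* [p] interpolates the indicator of [a ord0]: [p.[y] = (y == a ord0)%:R]. *)
pose p : {poly F} := 1 - ('X - (a ord0)%:P) ^+ q.-1.
have size_p : (size p <= q)%N.
  rewrite (leq_trans (size_polyD _ _)) // size_polyN size_exp_XsubC size_poly1.
  by rewrite geq_max ltn_predL ltnW // card_gt1.
have -> : delta a = \sum_(j < q) p`_j *: tensorX j (delta (vtail a)).
  apply/ffunP=> x; rewrite sum_ffunE !ffunE.
  under eq_bigr do rewrite !ffunE [_ *: _]mulrA.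
  rewrite -mulr_suml -horner_coef_wide // !hornerE expr_card_pred subr_eq0.
  rewrite {1}[a]vcons_eta vcons_eq.
  by case: (x ord0 == a ord0); case: (vtail x == vtail a); rewrite /= ?mulr1 ?mulr0 ?subr0 ?subrr.
apply: memv_suml => j _; apply: memvZ.
have := memv_img (linfun (tensorX j)) (IHn (vtail a)).
rewrite limg_span lfunE; apply: subvP; apply/span_subvP => _ /mapP [_ /mapP [t _ ->] ->].
rewrite lfunE /= tensorX_monomial -(ord_exp_vcons j t).
by apply/memv_span/map_f; rewrite mem_enum.
Qed.

Lemma dim_vfun d : dim (vfun d) = (q ^ d)%N.
Proof. by rewrite (_ : dim _ = #|vec d| * 1)%N // card_ffun card_ord muln1. Qed.

Lemma free_all_reduced_monomials d : free (all_reduced_monomials d).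
Proof.
have span_full : <<all_reduced_monomials d>>%VS = fullv.
  apply/eqP; rewrite eqEsubv subvf; apply/subvP=> f _.
  rewrite [f]vfun_delta_sum; apply: memv_suml => a _; apply/memvZ/delta_in_reduced_span.
by rewrite /free span_full dimvf dim_vfun size_map -cardE card_ffun !card_ord.
Qed.

Lemma free_reduced_monomials d k : free (reduced_monomials d k).
Proof.
set P := fun t : {ffun 'I_d -> 'I_q} => (edeg (ord_exp t) <= k)%N.
have := free_all_reduced_monomials d.
rewrite /all_reduced_monomials -(perm_free (perm_map _ (permEl (perm_filterC P _)))).
by rewrite map_cat => /catl_free.
Qed.

(** * The hyperplanes [x_0 = 1] and [x_0 = 0] *)

Definition restr1 n (f : vfun n.+1) : vfun n := [ffun y : vec n => f (vcons 1 y)].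
Definition ext1 n (h : vfun n) : vfun n.+1 :=
  [ffun x : vec n.+1 => (x ord0 == 1)%:R * h (vtail x)].
Definition ext0 n (h : vfun n) : vfun n.+1 :=
  [ffun x : vec n.+1 => (x ord0 == 0)%:R * h (vtail x)].

Fact restr1_is_linear n : linear (@restr1 n).
Proof. by move=> c u v; apply/ffunP=> x; rewrite !ffunE. Qed.
Fact ext1_is_linear n : linear (@ext1 n).
Proof. by move=> c u v; apply/ffunP=> x; rewrite !ffunE mulrDr mulrCA. Qed.
Fact ext0_is_linear n : linear (@ext0 n).
Proof. by move=> c u v; apply/ffunP=> x; rewrite !ffunE mulrDr mulrCA. Qed.
HB.instance Definition _ n := GRing.isLinear.Build F (vfun n.+1) (vfun n) _
  (@restr1 n) (@restr1_is_linear n).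
HB.instance Definition _ n := GRing.isLinear.Build F (vfun n) (vfun n.+1) _
  (@ext1 n) (@ext1_is_linear n).
HB.instance Definition _ n := GRing.isLinear.Build F (vfun n) (vfun n.+1) _
  (@ext0 n) (@ext0_is_linear n).

Lemma restr1_proj_monomial n (e : {ffun 'I_n.+1 -> nat}) :
  restr1 (proj_monomial e) = monomial (vtail e).
Proof.
apply/ffunP=> y; rewrite [LHS]ffunE [LHS]ffunE monomialS normalizedS !vcons_ord0.
by rewrite vconsK eqxx expr1n !mul1r.
Qed.

Lemma restr1_ext0 n (h : vfun n) : restr1 (ext0 h) = 0.
Proof. by apply/ffunP=> y; rewrite [LHS]ffunE [LHS]ffunE vcons_ord0 oner_eq0 mul0r ffunE. Qed.

Lemma ext0_inj n : lker (linfun (@ext0 n)) = 0%VS.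
Proof.
apply/eqP/lker0P => u v; rewrite !lfunE /= => uv; apply/ffunP=> y.
have := congr1 (fun f : vfun n.+1 => f (vcons 0 y)) uv.
by rewrite /= !(ffunE (fun x : vec n.+1 => _ * _)) vcons_ord0 vconsK eqxx !mul1r.
Qed.

(* A normalized point has [x_0 = 1], or [x_0 = 0] and a normalized tail. *)
Lemma proj_monomialS n (e : {ffun 'I_n.+1 -> nat}) :
  proj_monomial e =
    ext1 (monomial (vtail e)) + (e ord0 == 0%N)%:R *: ext0 (proj_monomial (vtail e)).
Proof.
case: (e ord0 =P 0%N) => [e0|e0]; rewrite ?scale1r ?scale0r ?addr0;
  apply/ffunP=> x; rewrite [LHS]ffunE monomialS normalizedS !ffunE.
- rewrite e0 expr0 mul1r; have [->|x0N1] := eqVneq (x ord0) 1.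
    by rewrite oner_eq0 mul0r addr0.
  by case: (x ord0 == 0); rewrite /= ?mulr0n ?mulr1n ?mul0r ?mul1r ?add0r.
- have [->|x0N1] := eqVneq (x ord0) 1; first by rewrite expr1n !mul1r.
  have [x00|] := eqVneq (x ord0) 0; last by rewrite !mul0r.
  by rewrite x00 expr0n (introF eqP e0) !mul0r mulr0.
Qed.

Lemma proj_monomial_pos n (e : {ffun 'I_n.+1 -> nat}) :
  (0 < e ord0)%N -> proj_monomial e = ext1 (monomial (vtail e)).
Proof. by rewrite lt0n => /negbTE e0; rewrite proj_monomialS e0 scale0r addr0. Qed.

Lemma proj_monomial_zero n (e : {ffun 'I_n.+1 -> nat}) : e ord0 = 0%N ->
  proj_monomial e = ext1 (monomial (vtail e)) + ext0 (proj_monomial (vtail e)).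
Proof. by move=> e0; rewrite proj_monomialS e0 eqxx scale1r. Qed.

Lemma proj_monomial_reduce_exp d (e : {ffun 'I_d -> nat}) i :
  (q <= e i)%N -> proj_monomial (reduce_exp e i) = proj_monomial e.
Proof. by move=> qe; rewrite /proj_monomial monomial_reduce_exp. Qed.

Lemma card_pred_gt0 : (0 < q.-1)%N. Proof. by have := card_gt1; lia. Qed.

(* [ext0 x^e] is the difference of the two degree-[k] codewords [x^(0, e')] and
   [x^(q-1, e)], where [e'] raises a nonzero entry of [e] by [q - 1]. *)
Lemma ext0_proj_monomial_in_span n k (e : {ffun 'I_n -> nat}) :
  (q <= k)%N -> edeg e = (k - q.-1)%N -> ext0 (proj_monomial e) \in proj_span n.+1 k.
Proof.
move=> qk ek; have [i ei] : exists i, (0 < e i)%N.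
  apply/existsP; apply: contraTT qk => /existsPn e0; rewrite -ltnNge.
  have : edeg e = 0%N.
    by apply/eqP; rewrite sum_nat_eq0; apply/forallP=> i; have := e0 i; rewrite lt0n negbK.
  have := card_gt1; lia.
pose e' := [ffun j => if j == i then (e j + q.-1)%N else e j].
have qe' : (q <= e' i)%N by rewrite ffunE eqxx; have := card_gt1; lia.
have e'K : reduce_exp e' i = e.
  by apply/ffunP=> j; rewrite !ffunE; case: eqP => [->|]; rewrite ?eqxx ?addnK.
have e'k : edeg e' = k by rewrite -(edeg_reduce_exp qe') e'K ek; have := card_gt1; lia.
have -> : ext0 (proj_monomial e) =
    proj_monomial (vcons 0%N e') - proj_monomial (vcons q.-1 e).
  rewrite proj_monomial_zero ?vcons_ord0 // proj_monomial_pos ?vcons_ord0 ?card_pred_gt0 //.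
  by rewrite !vconsK -(monomial_reduce_exp qe') -(proj_monomial_reduce_exp qe') e'K addrC addKr.
by apply: memvB; apply: proj_monomial_in_span; rewrite edeg_vcons ?e'k // ek; have := card_gt1; lia.
Qed.

Lemma dim_proj_span_ge n k :
  (size (reduced_monomials n k) + (if (q <= k)%N then \dim (proj_span n (k - q.-1)) else 0)
     <= \dim (proj_span n.+1 k))%N.
Proof.
rewrite -(limg_ker_dim (linfun (@restr1 n)) (proj_span n.+1 k)) [X in (_ <= X)%N]addnC.
apply: leq_add.
  have /eqP <- := free_reduced_monomials n k; apply: dimvS.
  apply/span_subvP => v /mapP [t]; rewrite mem_filter => /andP[tk _] ->.
  have ek : edeg (vcons (k - edeg (ord_exp t))%N (ord_exp t)) = k by rewrite edeg_vcons subnK.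
  have := memv_img (linfun (@restr1 n)) (proj_monomial_in_span ek).
  by rewrite lfunE /= restr1_proj_monomial vconsK.
case: ifP => // qk.
rewrite -(limg_dim_eq (f := linfun (@ext0 n))); last by rewrite ext0_inj capv0.
apply: dimvS; rewrite subv_cap; apply/andP; split.
  rewrite limg_span; apply/span_subvP => v /mapP [w /mapP [e]].
  rewrite mem_exps_of_deg => /eqP ek -> ->.
  by rewrite lfunE /=; apply: ext0_proj_monomial_in_span.
apply/subvP => v /memv_imgP [h _ ->].
by rewrite memv_ker !lfunE /= restr1_ext0.
Qed.

Definition top_proj_monomials n k : seq (vfun n.+1) :=
  [seq proj_monomial (vcons 0%N (ord_exp t)) |
     t <- [seq t <- enum {ffun 'I_n -> 'I_q} | edeg (ord_exp t) == k]].

Lemma size_reduced_monomialsS n k :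
  size (reduced_monomials n k.+1) =
    (size (reduced_monomials n k) + size (top_proj_monomials n k.+1))%N.
Proof.
rewrite !size_map !size_filter -count_predUI -[LHS]addn0.
rewrite -(count_pred0 (enum {ffun 'I_n -> 'I_q})).
congr (_ + _)%N; apply: eq_count => t /=.
  by rewrite leq_eqVlt ltnS orbC.
by case: (edeg _ =P k.+1) => [->|_]; rewrite ?ltnn ?andbF.
Qed.

Lemma dim_limg_le (U V : vectType F) (f : 'Hom(U, V)) (X : {vspace U}) :
  (\dim (f @: X) <= \dim X)%N.
Proof. by rewrite -(limg_ker_dim f X) leq_addl. Qed.

(* The codeword of [x^e] is [ext1] of a monomial of degree [< k] unless [e_0 = 0];
   then it is either [x^(0,t)] with [t] reduced, or, reducing [t], the sum of such
   an [ext1] and of [ext0] of a codeword of degree [k - (q - 1)]. *)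
Lemma proj_span_cover n k : (0 < k)%N ->
  (proj_span n.+1 k <= linfun (@ext1 n) @: <<reduced_monomials n k.-1>>
     + <<top_proj_monomials n k>>
     + (if (q <= k)%N then linfun (@ext0 n) @: proj_span n (k - q.-1)%N else 0))%VS.
Proof.
move=> k_gt0; apply: proj_span_sub => e ek.
have ext1_in h : (edeg h <= k.-1)%N ->
    ext1 (monomial h) \in (linfun (@ext1 n) @: <<reduced_monomials n k.-1>>)%VS.
  by move=> hk; rewrite -[ext1 _]lfunE; apply/memv_img/monomial_in_reduced_span.
have [e0|e_pos] := posnP (e ord0); last first.
  rewrite proj_monomial_pos //; apply/(subvP (addvSl _ _))/(subvP (addvSl _ _)).
  by apply: ext1_in; rewrite edegS in ek; lia.
rewrite edegS e0 add0n in ek.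
have [/forallP tail_lt | /forallPn [i]] := boolP [forall i, (vtail e i < q)%N].
  apply/(subvP (addvSl _ _))/(subvP (addvSr _ _)).
  pose t := [ffun i => Ordinal (tail_lt i)].
  have et : ord_exp t = vtail e by apply/ffunP=> i; rewrite !ffunE.
  rewrite [e]vcons_eta e0 -et; apply/memv_span/map_f.
  by rewrite mem_filter mem_enum et ek eqxx.
rewrite -leqNgt => qe; have qk : (q <= k)%N by rewrite -ek (leq_trans qe (leq_edeg _ _)).
have red_deg := edeg_reduce_exp qe; have q_gt1 := card_gt1.
rewrite proj_monomial_zero // -(monomial_reduce_exp qe) -(proj_monomial_reduce_exp qe) qk.
apply: memv_add; first by apply/(subvP (addvSl _ _))/ext1_in; lia.
by rewrite -[ext0 _]lfunE; apply/memv_img/proj_monomial_in_span; lia.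
Qed.

Lemma dim_proj_span_le n k : (0 < k)%N ->
  (\dim (proj_span n.+1 k) <= size (reduced_monomials n k)
     + (if (q <= k)%N then \dim (proj_span n (k - q.-1)) else 0))%N.
Proof.
move=> k_gt0; apply: leq_trans (dimvS (proj_span_cover n k_gt0)) _.
apply: leq_trans (leq_of_leqif (dimv_add_leqif _ _)) _.
apply: leq_trans (leq_add (leq_of_leqif (dimv_add_leqif _ _)) (leqnn _)) _.
rewrite -(prednK k_gt0) size_reduced_monomialsS prednK //.
apply: leq_add; first apply: leq_add.
- exact: leq_trans (dim_limg_le _ _) (dim_span _).
- exact: dim_span.
- by case: ifP => _; rewrite ?dimv0 ?dim_limg_le.
Qed.

Lemma dim_proj_spanS n k : (0 < k)%N ->
  \dim (proj_span n.+1 k) = (size (reduced_monomials n k)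
     + (if (q <= k)%N then \dim (proj_span n (k - q.-1)) else 0))%N.
Proof. by move=> k_gt0; apply/eqP; rewrite eqn_leq dim_proj_span_le // dim_proj_span_ge. Qed.

(** * Counting *)

Lemma size_reduced_monomials_mono n a b : (a <= b)%N ->
  (size (reduced_monomials n a) <= size (reduced_monomials n b))%N.
Proof.
move=> ab; rewrite !size_map !size_filter; apply: sub_count => t /= ta.
exact: leq_trans ta ab.
Qed.

Lemma dim_proj_span_mono n a b : (0 < a)%N -> (a <= b)%N ->
  (\dim (proj_span n a) <= \dim (proj_span n b))%N.
Proof.
elim: n a b => [|n IHn] a b a_gt0 ab; first by rewrite !proj_span0 dimv0.
rewrite !dim_proj_spanS //; last exact: leq_trans ab.
apply: leq_add; first exact: size_reduced_monomials_mono.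
case: ifP => // qa; rewrite (leq_trans qa ab) IHn ?leq_sub2r //.
by have := card_gt1; lia.
Qed.

Lemma exists_reduced_exp n j : (j <= n * q.-1)%N ->
  exists t : {ffun 'I_n -> 'I_q}, edeg (ord_exp t) = j.
Proof.
elim: j => [|j IHj] jn.
  by exists [ffun => Ordinal (ltnW card_gt1)]; rewrite /edeg big1 // => i _; rewrite !ffunE.
have [t tj] := IHj (ltnW jn).
have [i ti] : exists i, (t i < q.-1)%N.
  apply/existsP; apply: contraTT jn => /existsPn t_max.
  rewrite -leqNgt -tj /edeg -[n in (n * _)%N]card_ord -sum_nat_const leq_sum // => i _.
  by rewrite ffunE leqNgt t_max.
have ti' : ((t i).+1 < q)%N by rewrite -ltn_predRL.
exists [ffun l => if l == i then Ordinal ti' else t l].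
rewrite /edeg (bigD1 i) //= -tj /edeg [in RHS](bigD1 i) //= !ffunE eqxx addSn.
by congr (_.+1 + _)%N; apply: eq_bigr => l /negbTE li; rewrite !ffunE li.
Qed.

Lemma size_reduced_monomials_gap n a b : (a <= b)%N -> (b <= n * q.-1)%N ->
  (size (reduced_monomials n a) + (b - a) <= size (reduced_monomials n b))%N.
Proof.
elim: b => [|b IHb] ab bn; first by move: ab; rewrite leqn0 => /eqP ->; rewrite subnn addn0.
move: ab; rewrite leq_eqVlt => /orP[/eqP -> | ]; first by rewrite subnn addn0.
rewrite ltnS => ab; rewrite size_reduced_monomialsS subSn // addnS -addn1.
apply: leq_add (IHb ab (ltnW bn)) _.
have [t tb] := exists_reduced_exp bn.
rewrite size_map size_filter -has_count; apply/hasP; exists t; rewrite ?mem_enum //.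
by rewrite tb.
Qed.

Lemma dim_proj_span_gap n a b : (0 < a)%N -> (a <= b)%N -> (b <= n * q.-1)%N ->
  (\dim (proj_span n.+1 a) + (b - a) <= \dim (proj_span n.+1 b))%N.
Proof.
move=> a_gt0 ab bn; rewrite !dim_proj_spanS //; last exact: leq_trans ab.
rewrite addnAC; apply: leq_add; first exact: size_reduced_monomials_gap.
case: ifP => // qa; rewrite (leq_trans qa ab) dim_proj_span_mono ?leq_sub2r //.
by have := card_gt1; lia.
Qed.

End ProjectiveMonomials.

(** * Transfer to the projective Reed-Muller code *)

Section Transfer.
Variables (F : finFieldType) (n : nat).
Local Notation N := (proj_N F n).
Local Notation pts := (proj_points F n).
Local Notation pt i := (nth [ffun => 0] pts i).

(* A word, read as the function taking the value [r_i] at [P'_i] and [0] off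
   the normalized representatives. *)
Definition word_fun (r : 'rV[F]_N) : vfun F n.+1 :=
  [ffun x => \sum_(i < N) (pt i == x)%:R * r 0 i].

Fact word_fun_is_linear : linear word_fun.
Proof.
move=> c u v; apply/ffunP=> x; rewrite !ffunE -[c *: \sum_(_ < _) _]/(c * _).
rewrite mulr_sumr -big_split.
by apply: eq_bigr => i _; rewrite !mxE mulrDr mulrCA.
Qed.
HB.instance Definition _ := GRing.isLinear.Build F 'rV[F]_N (vfun F n.+1) _
  word_fun word_fun_is_linear.

Lemma proj_points_uniq : uniq pts.
Proof. by rewrite filter_uniq // enum_uniq. Qed.

Lemma mem_proj_points x : (x \in pts) = normalized x.
Proof. by rewrite mem_filter mem_enum andbT. Qed.

Lemma word_fun_pt r (i : 'I_N) : word_fun r (pt i) = r 0 i.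
Proof.
rewrite ffunE (bigD1 i) //= eqxx mul1r big1 ?addr0 // => j ji.
by rewrite nth_uniq ?proj_points_uniq ?ltn_ord // val_eqE (negbTE ji) mul0r.
Qed.

Lemma word_fun_inj : lker (linfun word_fun) = 0%VS.
Proof.
apply/eqP/lker0P => u v; rewrite !lfunE /= => uv; apply/rowP => i.
by rewrite -!word_fun_pt uv.
Qed.

Lemma word_fun_prm_eval k (P : dhomog n.+1 F k) :
  word_fun (prm_eval P) = [ffun x => (normalized x)%:R * (val P).@[x]].
Proof.
apply/ffunP=> x; rewrite !ffunE -mem_proj_points.
pose ev (y : vec F n.+1) := (val P).@[y].
rewrite -(sum_nth_indicator [ffun => 0] ev _ proj_points_uniq).
by apply: eq_bigr => i _; rewrite mxE.
Qed.

Definition mnm_exp (m : 'X_{1..n.+1}) : {ffun 'I_n.+1 -> nat} := [ffun i => m i].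

Lemma edeg_mnm_exp m : edeg (mnm_exp m) = mdeg m.
Proof. by rewrite mdegE; apply: eq_bigr => i _; rewrite ffunE. Qed.

Lemma word_fun_PRM_code k : (linfun word_fun @: PRM_code F n k = proj_span F n.+1 k)%VS.
Proof.
apply/eqP; rewrite eqEsubv; apply/andP; split.
  apply/subvP => _ /memv_imgP [_ /memv_imgP [P _ ->] ->].
  rewrite PRM_codeE lfunE /= word_fun_prm_eval.
  have -> : [ffun x => (normalized x)%:R * (val P).@[x]] =
      \sum_(m <- msupp (val P)) (val P)@_m *: proj_monomial F (mnm_exp m).
    apply/ffunP=> x; rewrite !ffunE mevalE sum_ffunE mulr_sumr; apply: eq_bigr => m _.
    rewrite !ffunE [_ *: _]/(_ * _) mulrCA; congr (_ * (_ * _)).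
    by apply: eq_bigr => i _; rewrite ffunE.
  rewrite big_seq; apply: memv_suml => m mP; apply/memvZ/proj_monomial_in_span.
  by rewrite edeg_mnm_exp (dhomogP _ _ _ (dhomog_is_dhomog P) m mP).
apply: proj_span_sub => e ek.
pose m : 'X_{1..n.+1} := [multinom e i | i < n.+1].
have mk : 'X_[m] \is [in F[n.+1], k.-homog].
  rewrite dhomogX; change (mdeg m == k); rewrite mdegE -ek.
  by apply/eqP/eq_bigr => i _; rewrite mnmE.
have -> : proj_monomial F e = linfun word_fun (prm_eval (DHomog mk)).
  rewrite lfunE /= word_fun_prm_eval; apply/ffunP=> x; rewrite !ffunE /= mevalX.
  by congr (_ * _); apply: eq_bigr => i _; rewrite mnmE.
by apply: memv_img; rewrite -PRM_codeE; apply/memv_img/memvf.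
Qed.

Lemma PRM_dimE k : PRM_dim F n k = \dim (proj_span F n.+1 k).
Proof.
rewrite /PRM_dim -(limg_dim_eq (f := linfun word_fun)) ?word_fun_PRM_code //.
by rewrite word_fun_inj capv0.
Qed.

End Transfer.

Theorem mainTheorem2 (F : finFieldType) (n a b : nat) :
  (1 <= n)%N -> (1 <= a)%N -> (a < b)%N -> (b <= n * (#|F| - 1))%N ->
  (b - a <= PRM_dim F n b - PRM_dim F n a)%N.
Proof.
(* [1 <= n] is implied by [a < b <= n (q - 1)]. *)
move=> _ a_gt0 ab bn; rewrite !PRM_dimE.
have bn' : (b <= n * #|F|.-1)%N by rewrite -subn1.
have := dim_proj_span_gap a_gt0 (ltnW ab) bn'; lia.
Qed.
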